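(* Let $X$ be a $T_1$ topological space with at least two points and let $f\neq g$ be vertices of $\Gamma(C_c(X)_F)$. Then (i) $c(f,g)=3$ iff $Z(f)\cup Z(g)=X$ and $Z(f)\cap Z(g)\neq\emptyset$; (ii) $c(f,g)=4$ iff either ($Z(f)\cup Z(g)=X$ and $Z(f)\cap Z(g)=\emptyset$) or ($Z(f)\cup Z(g)\neq X$ and $Z(f)\cap Z(g)\neq\emptyset$); (iii) $c(f,g)=6$ iff $Z(f)\cup Z(g)\neq X$ and $Z(f)\cap Z(g)=\emptyset$.
   Context: $C_c(X)_F$ denotes the set of all functions $f:X\to\mathbb{R}$ whose range is countable and whose set of points of discontinuity is finite. $Z(f)=\{x:f(x)=0\}$. $\Gamma(C_c(X)_F)$ is the zero-divisor graph: vertices are the nonzero zero divisors of $C_c(X)_F$, and distinct vertices $f,g$ are adjacent iff $fg=0$. $c(f,g)$ is the length of a shortest cycle (with distinct vertices) containing both $f$ and $g$, and $c(f,g)=\infty$ if no such cycle exists. *)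

From HB Require Import structures.
From mathcomp Require Import all_boot all_order all_algebra.
From mathcomp Require Import all_classical all_reals all_analysis.
Set Implicit Arguments. Unset Strict Implicit. Unset Printing Implicit Defensive.
Import Order.TTheory GRing.Theory Num.Theory numFieldNormedType.Exports.
Local Open Scope classical_set_scope.
Local Open Scope ring_scope.

Definition CcF (X : topologicalType) (R : realType) (f : X -> R) : Prop :=
  countable (range f) /\ finite_set [set x : X | ~ {for x, continuous f}].

Definition Zset (X : Type) (R : realType) (f : X -> R) : set X :=
  [set x | f x = 0].

Definition vertex (X : topologicalType) (R : realType) (f : X -> R) : Prop :=
  CcF f /\ f <> (fun _ => 0) /\
  exists g : X -> R, CcF g /\ g <> (fun _ => 0) /\ (forall x, f x * g x = 0).

Definition adj (X : topologicalType) (R : realType) (f g : X -> R) : Prop :=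
  vertex f /\ vertex g /\ f <> g /\ (forall x, f x * g x = 0).

Definition is_cycle (X : topologicalType) (R : realType) (n : nat)
    (v : nat -> X -> R) : Prop :=
  (3 <= n)%N /\
  (forall i j, (i < n)%N -> (j < n)%N -> v i = v j -> i = j) /\
  (forall i, (i < n)%N -> adj (v i) (v ((i.+1) %% n)%N)).

Definition cycle_through (X : topologicalType) (R : realType) (n : nat)
    (f g : X -> R) : Prop :=
  exists v : nat -> X -> R, is_cycle n v /\
    (exists i, (i < n)%N /\ v i = f) /\ (exists j, (j < n)%N /\ v j = g).

Definition cfg_eq (X : topologicalType) (R : realType) (f g : X -> R)
    (n : nat) : Prop :=
  cycle_through n f g /\ forall m, (m < n)%N -> ~ cycle_through m f g.

From HB Require Import structures.
From mathcomp Require Import all_boot all_order all_algebra.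
From mathcomp Require Import all_classical all_reals all_analysis.
From mathcomp Require Import zify.
Import Order.TTheory GRing.Theory Num.Theory.
Local Open Scope classical_set_scope.
Local Open Scope ring_scope.

Set Implicit Arguments. Unset Strict Implicit.

(* A cycle of length at most 5 through f and g makes them adjacent or gives
   them a common neighbour h.  Adjacency means fg = 0, i.e. Z(f) u Z(g) = X;
   a common neighbour h <> 0 forces f and g to vanish wherever h does not,
   so Z(f) n Z(g) is nonempty; in a triangle both happen.  Conversely, in a T1 space
   the spike with value c <> 0 at x and 0 elsewhere lies in C_c(X)_F and is
   adjacent to every vertex vanishing at x.  Spikes at a common zero of f and
   g, or at a zero of f and a zero of g, with fresh values, close cycles of
   length 3, 4 or 6 through f and g according to the two conditions. *)

Lemma neq_wlog_ltn (P : nat -> nat -> Prop) :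
  (forall i j, P i j -> P j i) -> (forall i j, (i < j)%N -> P i j) ->
  forall i j, i <> j -> P i j.
Proof. by move=> Psym Plt i j ij; case: (ltngtP i j) => [/Plt|/Plt/Psym|/ij]. Qed.

Lemma fresh_real (R : realDomainType) (s : seq R) : exists c : R, c \notin s.
Proof.
have [c sc] : exists c : R, forall a, a \in s -> a < c.
  elim: s => [|a s [c sc]]; first by exists 0.
  exists (Num.max a c + 1) => b; rewrite inE => /orP[/eqP->|/sc bc].
    by rewrite ltr_pwDr // le_max lexx.
  by rewrite ltr_pwDr // le_max (ltW bc) orbT.
by exists c; apply/negP => /sc; rewrite ltxx.
Qed.

Section ZeroDivisorGraph.
Variables (R : realType) (X : topologicalType).
Implicit Types (f g h : X -> R) (v : nat -> X -> R).

Lemma fun_neq_at f g : f <> g -> exists x, f x != g x.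
Proof.
move=> fg; apply: contrapT => nx; apply: fg; apply: funext => x.
by apply: contrapT => fgx; apply: nx; exists x; apply/eqP.
Qed.

Lemma vertex_has_zero f : vertex f -> exists x, f x = 0.
Proof.
move=> [_ [_ [h [_ [/fun_neq_at [x hx] fh]]]]]; exists x.
by move/eqP: (fh x); rewrite mulf_eq0 (negbTE hx) orbF => /eqP.
Qed.

Lemma adj_sym f g : adj f g -> adj g f.
Proof.
by move=> [vf [vg [fg fgx]]]; do 3?split => //; [move/esym | move=> x; rewrite mulrC].
Qed.

Lemma adj_Zset_cover f g : adj f g -> Zset f `|` Zset g = setT.
Proof.
move=> [_ [_ [_ fg]]]; apply/seteqP; split => // x _.
by move/eqP: (fg x); rewrite mulf_eq0 => /orP[] /eqP; [left|right].
Qed.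

Lemma adj_common_Zset_meet f g h : adj f h -> adj h g -> Zset f `&` Zset g <> set0.
Proof.
move=> [_ [[_ [/fun_neq_at [x hx] _]] [_ fh]]] [_ [_ [_ hg]]].
apply/eqP/set0P; exists x; split.
  by move/eqP: (fh x); rewrite mulf_eq0 (negbTE hx) orbF => /eqP.
by move/eqP: (hg x); rewrite mulf_eq0 (negbTE hx) => /eqP.
Qed.

Lemma adj_of_Zset_cover f g :
  vertex f -> vertex g -> f <> g -> Zset f `|` Zset g = setT -> adj f g.
Proof.
move=> vf vg fg cover; split=> //; split=> //; split=> // x.
have : (Zset f `|` Zset g) x by rewrite cover.
by case=> ->; rewrite ?mul0r ?mulr0.
Qed.

Lemma Zset_meet0_neq0 f g x : Zset f `&` Zset g = set0 -> f x = 0 -> g x != 0.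
Proof.
by move=> meet0 fx; apply/eqP => gx; have : (Zset f `&` Zset g) x by []; rewrite meet0.
Qed.

Lemma cycle_through_ge3 m f g : cycle_through m f g -> (3 <= m)%N.
Proof. by move=> [v [[]]]. Qed.

Section ShortCycles.
Variables (n : nat) (v : nat -> X -> R).
Hypothesis cyc : is_cycle n v.

Lemma is_cycle_step k : (k.+1 < n)%N -> adj (v k) (v k.+1).
Proof. by move=> kn; have := cyc.2.2 k (ltnW kn); rewrite modn_small. Qed.

Lemma is_cycle_wrap : adj (v n.-1) (v 0).
Proof.
have n0 : (0 < n)%N by have := cyc.1; lia.
by have := cyc.2.2 n.-1; rewrite prednK // modnn; apply; lia.
Qed.

Lemma short_cycle_close i j : (n <= 5)%N -> (i < n)%N -> (j < n)%N -> i <> j ->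
  adj (v i) (v j) \/ exists h, adj (v i) h /\ adj h (v j).
Proof.
move=> n5 + + ij; move: i j ij; apply: neq_wlog_ltn => [i j close hj hi|i j ij hi hj].
  have [/adj_sym|[h [/adj_sym jh /adj_sym hi']]] := close hi hj; first by left.
  by right; exists h.
have n3 := cyc.1; have step := is_cycle_step; have wrap := is_cycle_wrap.
have [j1|j1] := eqVneq j i.+1; first by left; rewrite j1; apply: step; rewrite -j1.
have [j2|j2] := eqVneq j i.+2.
  by right; exists (v i.+1); rewrite j2; split; apply: step; lia.
have [i0|i0] := eqVneq i 0%N; last first.
  have -> : i = 1%N by lia.
  have -> : j = n.-1 by lia.
  by right; exists (v 0); split; apply: adj_sym; [apply: step; lia | exact: wrap].
have [jn|jn] := eqVneq j n.-1; first by left; rewrite i0 jn; exact: adj_sym.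
right; exists (v n.-1); rewrite i0; split; first exact: adj_sym.
have -> : n.-1 = j.+1 by lia.
by apply: adj_sym; apply: step; lia.
Qed.

Lemma triangle_adj i j : n = 3%N -> (i < n)%N -> (j < n)%N -> i <> j -> adj (v i) (v j).
Proof.
move=> n3 + + ij; move: i j ij; apply: neq_wlog_ltn => [i j ij hj hi|i j ij hi hj].
  exact/adj_sym/ij.
have [j1|j1] := eqVneq j i.+1; first by rewrite j1; apply: is_cycle_step; rewrite -j1.
have [-> ->] : i = 0%N /\ j = n.-1 by lia.
exact/adj_sym/is_cycle_wrap.
Qed.

End ShortCycles.

Lemma cycle_through3_Zset f g : f <> g -> cycle_through 3 f g ->
  Zset f `|` Zset g = setT /\ Zset f `&` Zset g <> set0.
Proof.
move=> fg [v [cyc [[i [hi vi]] [j [hj vj]]]]].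
have ij : i <> j by move=> ij; apply: fg; rewrite -vi -vj ij.
have [k [hk ki kj]] : exists k, [/\ (k < 3)%N, k <> i & k <> j].
  by exists (3 - i - j)%N; split; lia.
have triangle := triangle_adj cyc erefl.
rewrite -vi -vj; split; first exact/adj_Zset_cover/triangle.
by apply: (@adj_common_Zset_meet _ _ (v k)); apply: triangle => //; apply: nesym.
Qed.

Lemma cycle_through_short_Zset m f g : f <> g -> cycle_through m f g -> (m <= 5)%N ->
  Zset f `|` Zset g = setT \/ Zset f `&` Zset g <> set0.
Proof.
move=> fg [v [cyc [[i [hi vi]] [j [hj vj]]]]] m5.
have ij : i <> j by move=> ij; apply: fg; rewrite -vi -vj ij.
rewrite -vi -vj; have [/adj_Zset_cover|[h [ih hj']]] := short_cycle_close cyc m5 hi hj ij.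
  by left.
by right; exact: adj_common_Zset_meet ih hj'.
Qed.

(* Functions X -> R have no decidable equality; distinctness of the listed
   vertices is certified by a separating signature [sig] into an eqType. *)
Lemma cycle_through_seq (T : eqType) (sig : (X -> R) -> T) (s : seq (X -> R)) i j :
  (3 <= size s)%N -> uniq (map sig s) ->
  (forall k, (k < size s)%N -> adj (nth (fun=> 0) s k) (nth (fun=> 0) s (k.+1 %% size s))) ->
  (i < size s)%N -> (j < size s)%N ->
  cycle_through (size s) (nth (fun=> 0) s i) (nth (fun=> 0) s j).
Proof.
move=> s3 s_uniq s_adj hi hj; exists (nth (fun=> 0) s).
split; last by split; [exists i | exists j].
split=> //; split=> // k l hk hl /(congr1 sig) e; apply/eqP.
by rewrite -(nth_uniq (sig (fun=> 0)) _ _ s_uniq) ?size_map // !(nth_map (fun=> 0)) ?e.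
Qed.

Section Spikes.
Hypothesis T1_X : accessible_space X.

Definition spike (x : X) (c : R) : X -> R := fun y => if y == x then c else 0.

Lemma spike_at x c : spike x c x = c.
Proof. by rewrite /spike eqxx. Qed.

Lemma spike_off x c y : y != x -> spike x c y = 0.
Proof. by rewrite /spike => /negbTE ->. Qed.

(* In a T1 space the spike vanishes on a neighbourhood of every other point. *)
Lemma CcF_spike x c : CcF (spike x c).
Proof.
split.
  apply: finite_set_countable; apply: (sub_finite_set _ (finite_set2 c 0)).
  by move=> _ [y _ <-]; rewrite /spike; case: ifP => _; [left|right].
apply: (sub_finite_set _ (finite_set1 x)) => y /= y_disc.
apply: contrapT => /eqP yx; apply: y_disc; apply: (near_cst_continuous 0).
have [A [oA Ay xNA]] := T1_X yx.
have : nbhs y A by apply: open_nbhs_nbhs; split => //; rewrite -inE.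
apply: filterS => z Az; apply: spike_off; apply/eqP => zx.
by move: xNA; rewrite -zx inE.
Qed.

Lemma spike_neq f x c : f x != c -> spike x c <> f.
Proof. by move=> fxc ef; move: fxc; rewrite -ef spike_at eqxx. Qed.

Lemma spike_mulr f x c : f x = 0 -> forall y, spike x c y * f y = 0.
Proof.
move=> fx0 y; case: (eqVneq y x) => [->|yx]; first by rewrite fx0 mulr0.
by rewrite spike_off ?mul0r.
Qed.

Hypothesis two_points : exists x y : X, x <> y.

Lemma vertex_spike x c : c != 0 -> vertex (spike x c).
Proof.
move=> c0; split; first exact: CcF_spike.
split; first by apply: spike_neq; rewrite eq_sym.
have [z zx] : exists z, z != x.
  have [y [y' yy']] := two_points.
  by case: (eqVneq y x) => [yx|]; [exists y'; rewrite -yx eq_sym; apply/eqP|exists y].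
exists (spike z 1); split; first exact: CcF_spike.
split; first by apply: spike_neq; rewrite eq_sym oner_neq0.
by apply: spike_mulr; rewrite spike_off // eq_sym.
Qed.

Lemma adj_spike_l f x c : vertex f -> f x = 0 -> c != 0 -> adj (spike x c) f.
Proof.
move=> vf fx c0; split; first exact: vertex_spike.
by do 2?split => //; [apply: spike_neq; rewrite fx eq_sym | exact: spike_mulr].
Qed.

Lemma adj_spikes x y c d : x != y -> c != 0 -> d != 0 -> adj (spike x c) (spike y d).
Proof.
by move=> xy c0 d0; apply: adj_spike_l => //; [exact: vertex_spike | rewrite spike_off].
Qed.

Section CycleConstructions.
Variables f g : X -> R.
Hypotheses (vf : vertex f) (vg : vertex g) (fg : f <> g).

Ltac sig_uniq := rewrite /= !inE !xpair_eqE !negb_or ?andbT;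
  repeat (apply/andP; split); apply/negP => /andP[/eqP ? /eqP ?];
  repeat match goal with H : is_true (_ != _) |- _ => move/eqP: H => H end; congruence.

Lemma cycle_through3 : Zset f `|` Zset g = setT -> Zset f `&` Zset g <> set0 ->
  cycle_through 3 f g.
Proof.
move=> cover /eqP/set0P[x [/= fx gx]]; have [z fgz] := fun_neq_at fg.
have one0 : (1 : R) != 0 := oner_neq0 R.
apply: (@cycle_through_seq _ (fun h => (h x, h z)) [:: f; g; spike x 1] 0 1) => //.
  by rewrite /= fx gx spike_at; sig_uniq.
case=> [|[|[|k]]] //= _; first exact: adj_of_Zset_cover.
  exact/adj_sym/adj_spike_l.
exact: adj_spike_l.
Qed.

Lemma cycle_through4_cover : Zset f `|` Zset g = setT -> Zset f `&` Zset g = set0 ->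
  cycle_through 4 f g.
Proof.
move=> cover meet0.
have [x gx] := vertex_has_zero vg; have [y fy] := vertex_has_zero vf.
have fx : f x != 0 by apply: Zset_meet0_neq0 gx; rewrite setIC.
have gy : g y != 0 := Zset_meet0_neq0 meet0 fy.
have yx : y != x by apply/eqP => yx; move: gy; rewrite yx gx eqxx.
have xy : x != y by rewrite eq_sym.
have [c] := fresh_real [:: 0; f x; g y]; rewrite !inE !negb_or => /and3P[c0 cfx cgy].
apply: (@cycle_through_seq _ (fun h => (h x, h y)) [:: f; g; spike x c; spike y c] 0 1) => //.
  by rewrite /= fy gx !spike_at !spike_off //; sig_uniq.
case=> [|[|[|[|k]]]] //= _; first exact: adj_of_Zset_cover.
- exact/adj_sym/adj_spike_l.
- exact: adj_spikes.
- exact: adj_spike_l.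
Qed.

Lemma cycle_through4_meet : Zset f `&` Zset g <> set0 -> cycle_through 4 f g.
Proof.
move=> /eqP/set0P[x [/= fx gx]]; have [z fgz] := fun_neq_at fg.
have one0 : (1 : R) != 0 := oner_neq0 R.
have two0 : (2 : R) != 0 by rewrite pnatr_eq0.
have one2 : (1 : R) != 2 by rewrite eq_sym -subr_eq0 [2]mulr2n addrK.
apply: (@cycle_through_seq _ (fun h => (h x, h z)) [:: f; spike x 1; g; spike x 2] 0 2) => //.
  by rewrite /= fx gx !spike_at; sig_uniq.
case=> [|[|[|[|k]]]] //= _.
- exact/adj_sym/adj_spike_l.
- exact: adj_spike_l.
- exact/adj_sym/adj_spike_l.
- exact: adj_spike_l.
Qed.

Lemma cycle_through6 : Zset f `&` Zset g = set0 -> cycle_through 6 f g.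
Proof.
move=> meet0.
have [x fx] := vertex_has_zero vf; have [y gy] := vertex_has_zero vg.
have gx : g x != 0 := Zset_meet0_neq0 meet0 fx.
have fy : f y != 0 by apply: Zset_meet0_neq0 gy; rewrite setIC.
have yx : y != x by apply/eqP => yx; move: fy; rewrite yx fx eqxx.
have xy : x != y by rewrite eq_sym.
have [c] := fresh_real [:: 0; f y; g x]; rewrite !inE !negb_or => /and3P[c0 cfy cgx].
have [c'] := fresh_real [:: 0; f y; g x; c].
rewrite !inE !negb_or => /and4P[c'0 c'fy c'gx c'c].
apply: (@cycle_through_seq _ (fun h => (h x, h y))
  [:: f; spike x c; spike y c; g; spike y c'; spike x c'] 0 3) => //.
  by rewrite /= fx gy !spike_at !spike_off //; sig_uniq.
case=> [|[|[|[|[|[|k]]]]]] //= _.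
- exact/adj_sym/adj_spike_l.
- exact: adj_spikes.
- exact: adj_spike_l.
- exact/adj_sym/adj_spike_l.
- exact: adj_spikes.
- exact: adj_spike_l.
Qed.

Lemma cfg_eq3 : Zset f `|` Zset g = setT -> Zset f `&` Zset g <> set0 -> cfg_eq f g 3.
Proof.
move=> cover meet; split; first exact: cycle_through3.
by move=> m m3 /cycle_through_ge3; rewrite leqNgt m3.
Qed.

Lemma cycle_through_lt4 m : (m < 4)%N -> cycle_through m f g ->
  Zset f `|` Zset g = setT /\ Zset f `&` Zset g <> set0.
Proof.
move=> m4 cyc; have m3 : m = 3%N by have := cycle_through_ge3 cyc; lia.
by rewrite m3 in cyc; exact: cycle_through3_Zset fg cyc.
Qed.

Lemma cfg_eq4_cover : Zset f `|` Zset g = setT -> Zset f `&` Zset g = set0 -> cfg_eq f g 4.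
Proof.
move=> cover meet0; split; first exact: cycle_through4_cover.
by move=> m m4 /(cycle_through_lt4 m4)[].
Qed.

Lemma cfg_eq4_meet : Zset f `|` Zset g <> setT -> Zset f `&` Zset g <> set0 -> cfg_eq f g 4.
Proof.
move=> ncover meet; split; first exact: cycle_through4_meet.
by move=> m m4 /(cycle_through_lt4 m4)[].
Qed.

Lemma cfg_eq6 : Zset f `|` Zset g <> setT -> Zset f `&` Zset g = set0 -> cfg_eq f g 6.
Proof.
move=> ncover meet0; split; first exact: cycle_through6.
by move=> m m6 /cycle_through_short_Zset[] // ->.
Qed.

End CycleConstructions.

End Spikes.

End ZeroDivisorGraph.

Lemma cfg_eqP (R : realType) (X : topologicalType) (f g : X -> R) n m :
  cfg_eq f g m -> (cfg_eq f g n <-> n = m).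
Proof.
move=> [cm m_min]; split=> [[cn n_min]|->] //.
by case: (ltngtP n m) => [/m_min|/n_min|] //.
Qed.

Theorem theorem8p16 (R : realType) (X : topologicalType)
  (hT1 : accessible_space X) (htwo : exists x y : X, x <> y)
  (f g : X -> R) (hf : vertex f) (hg : vertex g) (hfg : f <> g) :
  (cfg_eq f g 3 <-> (Zset f `|` Zset g = setT /\ Zset f `&` Zset g <> set0)) /\
  (cfg_eq f g 4 <->
     ((Zset f `|` Zset g = setT /\ Zset f `&` Zset g = set0) \/
      (Zset f `|` Zset g <> setT /\ Zset f `&` Zset g <> set0))) /\
  (cfg_eq f g 6 <-> (Zset f `|` Zset g <> setT /\ Zset f `&` Zset g = set0)).
Proof.
have [cover|ncover] := pselect (Zset f `|` Zset g = setT);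
  have [meet0|meet] := pselect (Zset f `&` Zset g = set0).
- rewrite !(cfg_eqP _ (cfg_eq4_cover hT1 htwo hf hg hfg cover meet0)); intuition congruence.
- rewrite !(cfg_eqP _ (cfg_eq3 hT1 htwo hf hg hfg cover meet)); intuition congruence.
- rewrite !(cfg_eqP _ (cfg_eq6 hT1 htwo hf hg hfg ncover meet0)); intuition congruence.
- rewrite !(cfg_eqP _ (cfg_eq4_meet hT1 htwo hf hg hfg ncover meet)); intuition congruence.
Qed.
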